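(* Let $n\ge 5$ be a prime, $\zeta_n=e^{2\pi i/n}$, $K=\mathbb{Q}(\zeta_n)$, and let $J=\{j_1,\dots,j_k\}\subseteq\{0,1,\dots,n-1\}$ with $k\ge 3$. Let $G$ be the $k\times n$ matrix over $K$ with $G_{i,l}=\zeta_n^{j_i(l-1)}$ ($1\le i\le k$, $1\le l\le n$). Then: (1) the code $\mathcal{C}$ generated by $G$ is a cyclic MDS code of length $n$ and dimension $k$ over $K$; (2) for every sufficiently large prime $p$ with $n\mid p-1$ (of which there are infinitely many), if $\mathfrak{p}$ is a prime ideal of $\mathbb{Z}[\zeta_n]$ lying above $p$ and $\overline{G}$ is the reduction of $G$ modulo $\mathfrak{p}$ (a matrix over $\mathbb{Z}[\zeta_n]/\mathfrak{p}\cong\mathbb{F}_p$), then the code generated by $\overline{G}$ is a cyclic MDS code of length $n$ and dimension $k$ over $\mathbb{F}_p$.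
   Context: A code of length $n$ is cyclic if it is invariant under the cyclic shift of coordinates. A linear $[n,k]$ code is MDS if its minimum distance is $n-k+1$, equivalently every $k\times k$ minor of a generator matrix is non-zero. *)

From HB Require Import structures.
From mathcomp Require Import all_boot all_order all_algebra all_field.
Set Implicit Arguments. Unset Strict Implicit. Unset Printing Implicit Defensive.
Import Order.TTheory GRing.Theory Num.Theory.
Local Open Scope ring_scope.

(* zeta_n = e^{2 pi i / n}: in algC, n.-root (-1) is the n-th root of -1 of
   minimal non-negative argument, i.e. e^{i pi / n}; its square is e^{2 pi i/n}. *)
Definition zeta_n (n : nat) : algC := (n.-root (-1)) ^+ 2.

Definition in_Qzeta (z : algC) (x : algC) : Prop :=
  exists q : {poly rat}, x = (map_poly ratr q).[z].

Definition in_Zzeta (z : algC) (x : algC) : Prop :=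
  exists q : {poly int}, x = (map_poly intr q).[z].

(* Cyclic shift of a word of length n: (c_0,...,c_{n-1}) |-> (c_{n-1},c_0,...,c_{n-2}). *)
Definition cshift (F : Type) (n : nat) (c : 'rV[F]_n) : 'rV[F]_n :=
  \row_(l < n) c 0 (ord_pred l).

(* The code over the subfield S (a predicate on F) generated by G : the
   S-linear combinations of the rows of G.  It is cyclic if it is invariant
   under the cyclic shift. *)
Definition cyclic_code (F : fieldType) (S : F -> Prop) (k n : nat)
    (G : 'M[F]_(k, n)) : Prop :=
  forall m : 'rV[F]_k, (forall i, S (m 0 i)) ->
    exists2 m' : 'rV[F]_k, (forall i, S (m' 0 i)) &
      cshift (m *m G) = m' *m G.

Definition mds_code (F : fieldType) (k n : nat) (G : 'M[F]_(k, n)) : Prop :=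
  \rank G = k /\
  forall f : 'I_k -> 'I_n, injective f -> \det (colsub f G) != 0.

(* The k x n matrix G_{i,l} = zeta^(j_i * l), l = 0..n-1. *)
Definition Gmat (n k : nat) (j : 'I_k -> 'I_n) : 'M[algC]_(k, n) :=
  \matrix_(i < k, l < n) (zeta_n n) ^+ (j i * l).

Definition ring_hom_on (F : nzRingType) (D : algC -> Prop) (phi : algC -> F) : Prop :=
  [/\ forall x y, D x -> D y -> phi (x + y) = phi x + phi y,
      forall x y, D x -> D y -> phi (x * y) = phi x * phi y
    & phi 1 = 1].

From HB Require Import structures.
From mathcomp Require Import all_boot all_order all_algebra all_field.
From mathcomp Require Import ring.
Set Implicit Arguments.
Unset Strict Implicit.
Unset Printing Implicit Defensive.
Import Order.TTheory GRing.Theory Num.Theory.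
Local Open Scope ring_scope.

(* Chebotarev's theorem: if z is a primitive p-th root of unity, p prime, then every minor
   det (z ^ (a_i * b_l)) with distinct a_i < p and distinct b_l < p is non-zero.  Write
   X^b = 1 + (X - 1) * (1 + X + ... + X^(b-1)) and expand X^(a_i * b_l) binomially: multiplying
   the polynomial matrix (X^(a_i * b_l)) by the adjugate of the binomial matrix C = ('C(a_i, m))
   makes row m divisible by (X - 1)^m, and the determinant of the quotient is a polynomial G with
   G(1) = (det C)^k * V(b), V the Vandermonde product.  If the minor vanished at z, so would G,
   hence 1 + X + ... + X^(p-1) would divide G and p would divide G(1); but det C * prod_m m! = V(a),
   and p divides neither V(a) nor V(b).

   Modulo p: the product D of all the k x k minors of (X^(j_i * l)) has no complex root in common
   with the cyclotomic polynomial Phi_n, so a resultant gives u * Phi_n + v * D = c for a non-zero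
   integer c.  Hence v(z) * D(z) = c in Z[z], and a ring homomorphism Z[z] -> F_p with p > |c|
   keeps every minor non-zero.  Cyclicity holds because the cyclic shift of a codeword multiplies
   the i-th message coordinate by z^(-j_i). *)

Lemma prime_prim_root (R : nzRingType) n (z : R) :
  prime n -> z ^+ n = 1 -> z != 1 -> n.-primitive_root z.
Proof.
move=> n_pr zn1 z_neq1; have [m prim_z m_dvd_n] := prim_order_exists (prime_gt0 n_pr) zn1.
have [_ /(_ m m_dvd_n) /orP[/eqP m1 | /eqP <- //]] := primeP n_pr.
by move: z_neq1; rewrite -(prim_expr_order prim_z) m1 expr1 eqxx.
Qed.

Lemma zeta_n_prim_root n : prime n -> n.-primitive_root (zeta_n n).
Proof.
move=> n_pr; have n_gt1 := prime_gt1 n_pr.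
have rootn : n.-root (-1 : algC) ^+ n = -1 by rewrite rootCK // ltnW.
apply: prime_prim_root => //; first by rewrite /zeta_n -exprM mulnC exprM rootn sqrrN expr1n.
rewrite /zeta_n sqrf_eq1 negb_or; apply/andP; split.
  by move/eqP: rootn; apply: contraTneq => ->; rewrite expr1n gt_eqF // (lt_trans (ltrN10 _) ltr01).
by apply: contraFneq (@rootC_lt0 algC n (-1) n_gt1) => ->; apply: ltrN10.
Qed.

Lemma Cyclotomic_prime p : prime p -> 'Phi_p = \sum_(i < p) 'X^i.
Proof.
move=> p_pr; have p_gt0 := prime_gt0 p_pr.
have divisors_p : perm_eq (divisors p) [:: 1%N; p].
  apply: uniq_perm => [||d]; first exact: divisors_uniq.
    by rewrite /= inE andbT neq_ltn prime_gt1.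
  rewrite -dvdn_divisors // !inE; have [-> | d_neq1] := eqVneq d 1%N; first exact: dvd1n.
  exact/prime_nt_dvdP/eqP.
have Phi1 : 'Phi_1 = 'X - 1.
  by have := prod_Cyclotomic (ltn0Sn 0); rewrite /divisors /= big_seq1 expr1.
have X1_neq0 : 'X - 1 != 0 :> {poly int} by rewrite -polyC1 polyXsubC_eq0.
have := prod_Cyclotomic p_gt0.
by rewrite (perm_big _ divisors_p) big_cons big_seq1 Phi1 subrX1 => /(mulfI X1_neq0).
Qed.

Lemma size_map_intr (R : numDomainType) (G : {poly int}) :
  size (map_poly (intr : int -> R) G) = size G.
Proof. by apply: size_map_inj_poly; [apply: intr_inj | rewrite rmorph0]. Qed.

Lemma Cyclotomic_dvd_root n (z : algC) (G : {poly int}) :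
  n.-primitive_root z -> root (map_poly intr G) z -> exists q, G = q * 'Phi_n.
Proof.
move=> prim_z Gz0; have Phi_monic := Cyclotomic_monic n.
pose q := Pdiv.CommonRing.rdivp G 'Phi_n; pose r := Pdiv.CommonRing.rmodp G 'Phi_n.
have Gqr : G = q * 'Phi_n + r := Pdiv.RingMonic.rdivp_eq Phi_monic G.
exists q; suff r0 : r = 0 by rewrite {1}Gqr r0 addr0.
have [pf [Dpf _] pf_dvd] := minCpolyP z.
have {}Dpf : map_poly ratr pf = map_poly intr 'Phi_n :> {poly algC}.
  by rewrite -Dpf (minCpoly_cyclotomic prim_z) (Cintr_Cyclotomic prim_z).
have r_z0 : root (map_poly ratr (map_poly intr r)) z.
  have -> : map_poly ratr (map_poly intr r) = map_poly intr r :> {poly algC}.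
    by rewrite -map_poly_comp; apply: eq_map_poly => c /=; rewrite rmorph_int.
  have -> : r = G - q * 'Phi_n by rewrite Gqr addrC addKr.
  rewrite /root rmorphB rmorphM /= hornerD hornerN hornerM -Dpf (rootP Gz0).
  have /rootP -> : root (map_poly ratr pf) z by rewrite pf_dvd.
  by rewrite mulr0 subrr.
apply: contraTeq (Pdiv.CommonRing.ltn_rmodpN0 G (monic_neq0 Phi_monic)) => r_neq0.
rewrite -leqNgt -(size_map_intr algC) -Dpf size_map_poly -(size_map_intr rat).
by apply: dvdp_leq; rewrite -?pf_dvd // -size_poly_eq0 size_map_intr size_poly_eq0.
Qed.

Lemma horner1_eq0_modp p (z : algC) (G : {poly int}) :
  prime p -> p.-primitive_root z -> root (map_poly intr G) z -> G.[1]%:~R = 0 :> 'F_p.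
Proof.
move=> p_pr prim_z /(Cyclotomic_dvd_root prim_z) [q ->].
rewrite hornerM Cyclotomic_prime // horner_sum.
under eq_bigr do rewrite hornerXn expr1n.
by rewrite sumr_const card_ord rmorphM rmorph_nat (pcharf0 (pchar_Fp p_pr)) mulr0.
Qed.

Definition binomial_mx {R : pzSemiRingType} k (a : 'I_k -> nat) : 'M[R]_k :=
  \matrix_(i, m) 'C(a i, m)%:R.

Section BinomialDeterminant.
Variable R : comNzRingType.

Let ffact_poly (m : nat) : {poly R} := \prod_(0 <= t < m) ('X - t%:R%:P).

Let size_ffact_poly m : size (ffact_poly m) = m.+1.
Proof. by rewrite size_prod_XsubC size_iota subn0. Qed.

Let horner_ffact_poly (x m : nat) : (ffact_poly m).[x%:R] = (x ^_ m)%:R.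
Proof.
elim: m => [|m IHm]; first by rewrite /ffact_poly big_geq ?hornerC.
rewrite /ffact_poly big_nat_recr //= hornerM -/(ffact_poly m) IHm hornerXsubC ffactnSr natrM.
have [m_le_x | x_lt_m] := leqP m x; first by rewrite natrB.
by rewrite ffact_small ?mul0r.
Qed.

Lemma det_binomial_mx k (a : 'I_k -> nat) :
  \det (binomial_mx a : 'M[R]_k) * \prod_(m < k) m`!%:R =
  \prod_(i < k) \prod_(j < k | (i < j)%N) ((a j)%:R - (a i)%:R).
Proof.
pose T : 'M[R]_k := \matrix_(l, m) (ffact_poly m)`_l.
have det_T : \det T = 1.
  rewrite -det_tr det_trig; last first.
    by apply/is_trig_mxP => m l lt_ml; rewrite !mxE nth_default ?size_ffact_poly.
  apply: big1 => m _; rewrite !mxE.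
  have /monicP : ffact_poly m \is monic by apply: monic_prod_XsubC.
  by rewrite lead_coefE size_ffact_poly.
have -> : \prod_(m < k) m`!%:R = \det (diag_mx (\row_(m < k) m`!%:R) : 'M[R]_k).
  by rewrite det_diag; apply: eq_bigr => m _; rewrite mxE.
rewrite -det_mulmx; transitivity (\det ((Vandermonde k (\row_i (a i)%:R))^T *m T)).
  congr (\det _); apply/matrixP => i m.
  rewrite mul_mx_diag !mxE -natrM bin_ffact -horner_ffact_poly.
  rewrite (@horner_coef_wide _ k); last by rewrite size_ffact_poly.
  by apply: eq_bigr => l _; rewrite !mxE mulrC.
rewrite det_mulmx det_T mulr1 det_tr det_Vandermonde.
by apply: eq_bigr => i _; apply: eq_bigr => j _; rewrite !mxE.
Qed.

End BinomialDeterminant.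

Lemma prod_diff_Fp_neq0 p k (a : 'I_k -> 'I_p) : prime p -> injective a ->
  \prod_(i < k) \prod_(j < k | (i < j)%N) ((a j)%:R - (a i)%:R : 'F_p) != 0.
Proof.
move=> p_pr a_inj; apply/prodf_neq0 => i _; apply/prodf_neq0 => j lt_ij.
rewrite subr_eq0; apply: contraTneq lt_ij => /(congr1 (@nat_of_ord _)).
by rewrite !val_Fp_nat // !modn_small // => /val_inj/a_inj ->; rewrite ltnn.
Qed.

Definition pow_mx (R : pzSemiRingType) (x : R) p k m (a : 'I_k -> 'I_p) (b : 'I_m -> 'I_p) :
  'M[R]_(k, m) := \matrix_(i, l) x ^+ (a i * b l).

Lemma map_pow_mx (R S : pzSemiRingType) (f : {rmorphism R -> S}) (x : R) p k m
    (a : 'I_k -> 'I_p) (b : 'I_m -> 'I_p) :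
  map_mx f (pow_mx x a b) = pow_mx (f x) a b.
Proof. by apply/matrixP => i l; rewrite !mxE rmorphXn. Qed.

Lemma colsub_pow_mx (R : pzSemiRingType) (x : R) p k m m' (a : 'I_k -> 'I_p)
    (b : 'I_m -> 'I_p) (g : 'I_m' -> 'I_m) :
  colsub g (pow_mx x a b) = pow_mx x a (b \o g).
Proof. by apply/matrixP => i l; rewrite !mxE. Qed.

Lemma horner_det_pow_mx (R : comNzRingType) (x : R) p k (a b : 'I_k -> 'I_p) :
  (map_poly intr (\det (pow_mx 'X a b))).[x] = \det (pow_mx x a b).
Proof.
rewrite -(det_map_mx (map_poly intr)) map_pow_mx /= map_polyX -horner_evalE -det_map_mx.
by rewrite map_pow_mx /= horner_evalE hornerX.
Qed.

Lemma exprD1n_wide (R : pzSemiRingType) (y : R) x n : (x < n)%N ->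
  (y + 1) ^+ x = \sum_(r < n) y ^+ r *+ 'C(x, r).
Proof.
move=> lt_xn; rewrite exprD1n (big_ord_widen n (fun r => y ^+ r *+ 'C(x, r))) // big_mkcond.
by apply: eq_bigr => r _; case: ltnP => // /bin_small ->.
Qed.

Section ChebotarevFactorization.
Variables (p k : nat) (a b : 'I_k -> 'I_p).
Hypothesis k_le_p : (k <= p)%N.

Let C : 'M[int]_k := binomial_mx (val \o a).
Let e (m : 'I_k) (r : nat) : int := \sum_i \adj C m i * 'C(a i, r)%:R.
Let geom (l : 'I_k) : {poly int} := \sum_(t < b l) 'X^t.
Let N : 'M[{poly int}]_k :=
  \matrix_(m, l) \sum_(r < p) (e m r)%:P * ('X - 1) ^+ (r - m) * geom l ^+ r.

Let e_diag (m r : 'I_k) : e m r = \det C *+ (m == r).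
Proof.
have /matrixP/(_ m r) := mul_adj_mx C.
by rewrite !mxE => <-; apply: eq_bigr => i _; congr (_ * _); rewrite mxE.
Qed.

Let e_lt (m : 'I_k) r : (r < m)%N -> e m r = 0.
Proof.
move=> lt_rm; have lt_rk : (r < k)%N := ltn_trans lt_rm (ltn_ord m).
by have /= := e_diag m (Ordinal lt_rk); rewrite eq_sym -val_eqE /= ltn_eqF.
Qed.

Let mul_adj_pow_mx :
  map_mx polyC (\adj C) *m pow_mx 'X a b = diag_mx (\row_(m < k) ('X - 1) ^+ m) *m N.
Proof.
apply/matrixP => m l; rewrite mul_diag_mx !mxE.
have geomE : 'X^(b l) = ('X - 1) * geom l + 1 by rewrite -subrX1 subrK.
transitivity (\sum_(r < p) (e m r)%:P * (('X - 1) * geom l) ^+ r).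
  under eq_bigr => i _ do rewrite !mxE mulnC exprM geomE (exprD1n_wide _ (ltn_ord (a i))).
  under eq_bigr do rewrite big_distrr.
  rewrite exchange_big; apply: eq_bigr => r _ /=.
  rewrite /e rmorph_sum big_distrl; apply: eq_bigr => i _ /=.
  by rewrite mulr_natr rmorphMn mulrnAl mulrnAr [in RHS]mxE.
rewrite [RHS]big_distrr; apply: eq_bigr => r _ /=.
have [lt_rm | le_mr] := ltnP r m; first by rewrite e_lt // !mul0r mulr0.
by rewrite exprMn -(subnKC le_mr) exprD addKn; ring.
Qed.

Let horner1_geom l : (geom l).[1] = (b l)%:R.
Proof.
rewrite horner_sum; under eq_bigr do rewrite hornerXn expr1n.
by rewrite sumr_const card_ord.
Qed.

Let horner1_det_N :
  (\det N).[1] = \det C ^+ k * \prod_(i < k) \prod_(j < k | (i < j)%N) ((b j)%:R - (b i)%:R).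
Proof.
rewrite -horner_evalE -det_map_mx.
have -> : map_mx (horner_eval 1) N = \det C *: Vandermonde k (\row_l (b l)%:R).
  apply/matrixP => m l; rewrite !mxE horner_evalE horner_sum.
  rewrite (bigD1 (widen_ord k_le_p m)) //= big1 ?addr0 => [|r neq_rm].
    by rewrite subnn expr0 mulr1 hornerM hornerC horner_exp horner1_geom e_diag eqxx.
  rewrite !hornerM hornerC !horner_exp -polyC1 hornerXsubC subrr.
  case: (ltngtP r m) => [lt_rm | lt_mr | eq_rm]; first by rewrite e_lt // !mul0r.
    by rewrite expr0n subn_eq0 leqNgt lt_mr mulr0 mul0r.
  by move: neq_rm; rewrite -val_eqE /= eq_rm eqxx.
rewrite detZ det_Vandermonde; congr (_ * _).
by apply: eq_bigr => i _; apply: eq_bigr => j _; rewrite !mxE.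
Qed.

Lemma det_pow_mx_factor : exists2 G : {poly int},
    (\det (\adj C))%:P * \det (pow_mx 'X a b) = (\prod_(m < k) ('X - 1) ^+ m) * G
  & G.[1] = \det C ^+ k * \prod_(i < k) \prod_(j < k | (i < j)%N) ((b j)%:R - (b i)%:R).
Proof.
exists (\det N); last exact: horner1_det_N.
have := congr1 determinant mul_adj_pow_mx; rewrite !det_mulmx det_diag det_map_mx => ->.
by congr (_ * _); apply: eq_bigr => m _; rewrite mxE.
Qed.

End ChebotarevFactorization.

Theorem det_pow_mx_prim_root_neq0 p k (z : algC) (a b : 'I_k -> 'I_p) :
  prime p -> p.-primitive_root z -> injective a -> injective b ->
  \det (pow_mx z a b) != 0.
Proof.
move=> p_pr prim_z a_inj b_inj.
have k_le_p : (k <= p)%N by have := leq_card _ a_inj; rewrite !card_ord.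
have [G det_pow_mx_eq G1] := det_pow_mx_factor a b k_le_p.
have z_neq1 : z != 1.
  apply: contraTneq (prime_gt1 p_pr) => z1.
  by move: (prim_order_dvd prim_z 1); rewrite z1 expr1 eqxx dvdn1 => /eqP ->.
apply/eqP => det_pow_mx0.
have Gz0 : root (map_poly intr G) z.
  have := congr1 (fun q => (map_poly intr q).[z]) det_pow_mx_eq.
  rewrite /= !rmorphM !hornerM horner_det_pow_mx det_pow_mx0 mulr0 => /esym/eqP.
  rewrite mulf_eq0 rmorph_prod horner_prod prodf_seq_eq0 => /orP[/hasP[m _] | //].
  rewrite rmorphXn rmorphB rmorph1 /= map_polyX horner_exp -polyC1 hornerXsubC.
  by rewrite expf_eq0 subr_eq0 (negbTE z_neq1) andbF.
have := horner1_eq0_modp p_pr prim_z Gz0; rewrite G1 rmorphM rmorphXn -det_map_mx.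
have -> : map_mx intr (binomial_mx (val \o a)) = binomial_mx (val \o a) :> 'M['F_p]_k.
  by apply/matrixP => i m; rewrite !mxE rmorph_nat.
have det_binomial_neq0 : \det (binomial_mx (val \o a) : 'M['F_p]_k) != 0.
  apply: contraNneq (prod_diff_Fp_neq0 p_pr a_inj) => det0.
  by rewrite -det_binomial_mx det0 mul0r.
rewrite rmorph_prod; under eq_bigr do rewrite rmorph_prod.
under eq_bigr do under eq_bigr do rewrite rmorphB !rmorph_nat.
by apply/eqP; rewrite mulf_neq0 ?expf_neq0 ?prod_diff_Fp_neq0.
Qed.

Lemma cshift_pow_mx (R : pzRingType) (w : R) n k (j : 'I_k -> 'I_n) (u : 'rV[R]_k) :
  w ^+ n = 1 ->
  cshift (u *m pow_mx w j id) = (\row_i (u 0 i * w ^+ (n.-1 * j i))) *m pow_mx w j id.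
Proof.
move=> wn1; apply/rowP => l; rewrite !mxE; apply: eq_bigr => i _; rewrite !mxE -mulrA -exprD.
congr (_ * _); rewrite -(expr_mod _ wn1) -[RHS](expr_mod _ wn1) /= modnMmr.
have n_gt0 : (0 < n)%N by apply: leq_ltn_trans (ltn_ord l).
by rewrite -subn1 -addnBA // subn1 mulnDr addnC mulnC.
Qed.

Lemma mds_code_minors (F : fieldType) k n (G : 'M[F]_(k, n)) : (k <= n)%N ->
  (forall f : 'I_k -> 'I_n, injective f -> \det (colsub f G) != 0) -> mds_code G.
Proof.
move=> k_le_n minors; split => //; apply/eqP; rewrite eqn_leq rank_leq_row /=.
have widen_inj : injective (widen_ord k_le_n) by move=> i i' [] /val_inj.
have := mxrankM_maxl G (colsub (widen_ord k_le_n) 1%:M).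
by rewrite mulmx_colsub mulmx1 mxrank_unit // unitmxE unitfE minors.
Qed.

Lemma cyclic_mds_pow_mx (F : fieldType) (S : F -> Prop) (w : F) n k (j : 'I_k -> 'I_n) :
  w ^+ n = 1 -> (forall x e, S x -> S (x * w ^+ e)) -> injective j ->
  (forall f : 'I_k -> 'I_n, injective f -> \det (pow_mx w j f) != 0) ->
  cyclic_code S (pow_mx w j id) /\ mds_code (pow_mx w j id).
Proof.
move=> wn1 S_mulw j_inj minors; split.
  move=> u Su; exists (\row_i (u 0 i * w ^+ (n.-1 * j i))); last exact: cshift_pow_mx.
  by move=> i; rewrite mxE; apply: S_mulw.
apply: mds_code_minors => [|f f_inj]; first by have := leq_card _ j_inj; rewrite !card_ord.
by rewrite colsub_pow_mx; apply: minors.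
Qed.

Section RingHomOnZzeta.
Variables (F : nzRingType) (z : algC) (phi : algC -> F).
Hypothesis phi_hom : ring_hom_on (in_Zzeta z) phi.

Let Zzeta_horner q : in_Zzeta z (map_poly intr q).[z].
Proof. by exists q. Qed.

Let phiB x y : in_Zzeta z x -> in_Zzeta z y -> phi (x - y) = phi x - phi y.
Proof.
case: phi_hom => phiD _ _ [qx ->] [qy ->]; apply: (canRL (addrK _)).
by rewrite -phiD ?subrK ?Zzeta_horner //; exists (qx - qy); rewrite rmorphB hornerD hornerN.
Qed.

Let Zzeta_int c : in_Zzeta z c%:~R.
Proof. by exists c%:P; rewrite map_polyC hornerC. Qed.

Let Zzeta_nat m : in_Zzeta z m%:R.
Proof. by rewrite pmulrn. Qed.

Let phi_nat m : phi m%:R = m%:R.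
Proof.
case: phi_hom => phiD _ phi1; elim: m => [|m IHm].
  by apply: (@addrI _ (phi 0)); rewrite -phiD ?addr0 //; apply: (Zzeta_nat 0).
by rewrite [in LHS]mulrS phiD ?phi1 ?IHm -?mulrS //; apply: (Zzeta_nat 1).
Qed.

Let phi_int c : phi c%:~R = c%:~R.
Proof.
case: c => m; first by rewrite -pmulrn phi_nat.
by rewrite NegzE mulrNz -pmulrn -sub0r phiB ?(phi_nat 0) ?phi_nat ?sub0r //; apply: (Zzeta_nat 0).
Qed.

Lemma ring_hom_on_horner q : phi (map_poly intr q).[z] = (map_poly intr q).[phi z].
Proof.
case: phi_hom => phiD phiM _; elim/poly_ind: q => [|q c IHq].
  by rewrite !rmorph0 !horner0 (phi_nat 0).
rewrite !rmorphD !rmorphM /= !map_polyX !map_polyC !hornerD !hornerMX !hornerC /=.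
rewrite phiD ?phiM ?IHq ?phi_int //; last by exists (q * 'X); rewrite rmorphM /= map_polyX hornerMX.
by exists 'X; rewrite map_polyX hornerX.
Qed.

End RingHomOnZzeta.

Lemma int_poly_bezout (P D : {poly int}) : (1 < size P)%N ->
    (forall x : algC, root (map_poly intr P) x -> ~~ root (map_poly intr D) x) ->
  exists2 c : int, c != 0 & exists u v : {poly int}, u * P + v * D = c%:P.
Proof.
move=> P_nconst no_common_root.
have [x Px] : exists x, root (map_poly intr P : {poly algC}) x.
  by apply/closed_rootP; rewrite size_map_intr gtn_eqF.
have [D_const | D_nconst] := leqP (size D) 1.
  move/size1_polyC: D_const => DE; exists D`_0; last by exists 0, 1; rewrite mul0r add0r mul1r.
  by apply: contraNneq (no_common_root x Px) => D0; rewrite DE D0 polyC0 rmorph0 root0.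
have [[u v] _ uv_res] := resultant_in_ideal P_nconst D_nconst.
exists (resultant P D); last by exists u, v; rewrite uv_res.
rewrite resultant_eq0 -leqNgt; set g := gcdp P D.
have root_dvd (G : {poly int}) (y : algC) :
    g %| G -> root (map_poly intr g) y -> root (map_poly intr G) y.
  case/Pdiv.Idomain.dvdpP => -[c q] /= c_neq0 cG gy0.
  have := congr1 (fun H => (map_poly intr H : {poly algC}).[y]) cG.
  rewrite /= map_polyZ rmorphM /= hornerZ hornerM (rootP gy0) mulr0 => /eqP.
  by rewrite mulf_eq0 intr_eq0 (negbTE c_neq0).
rewrite leqNgt; apply/negP => g_nconst.
have [y gy] : exists y, root (map_poly intr g : {poly algC}) y.
  by apply/closed_rootP; rewrite size_map_intr gtn_eqF.
have := no_common_root y (root_dvd _ _ (Pdiv.Idomain.dvdp_gcdl P D) gy).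
by rewrite root_dvd // Pdiv.Idomain.dvdp_gcdr.
Qed.

Lemma det_pow_mx_neq0_modp n k (z : algC) (j : 'I_k -> 'I_n) :
    prime n -> n.-primitive_root z -> injective j ->
  exists N : nat, forall p, prime p -> (N <= p)%N ->
    forall phi : algC -> 'F_p, ring_hom_on (in_Zzeta z) phi ->
    forall f : 'I_k -> 'I_n, injective f -> \det (pow_mx (phi z) j f) != 0.
Proof.
move=> n_pr prim_z j_inj.
pose D : {poly int} := \prod_(g : {ffun 'I_k -> 'I_n} | injectiveb g) \det (pow_mx 'X j g).
have horner_D (R : comNzRingType) (x : R) :
    (map_poly intr D).[x] = \prod_(g : {ffun 'I_k -> 'I_n} | injectiveb g) \det (pow_mx x j g).
  by rewrite rmorph_prod horner_prod; apply: eq_bigr => g _; rewrite horner_det_pow_mx.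
have Phi_z : (map_poly intr 'Phi_n).[z] = 0.
  by apply/rootP; rewrite (Cintr_Cyclotomic prim_z) root_cyclotomic.
have Phi_nconst : (1 < size 'Phi_n)%N.
  by rewrite size_Cyclotomic totient_prime // prednK ?prime_gt1 ?prime_gt0.
have no_common_root (x : algC) : root (map_poly intr 'Phi_n) x -> ~~ root (map_poly intr D) x.
  rewrite (Cintr_Cyclotomic prim_z) (root_cyclotomic prim_z) => prim_x.
  rewrite /root horner_D; apply/prodf_neq0 => g /injectiveP g_inj.
  exact: det_pow_mx_prim_root_neq0 n_pr prim_x j_inj g_inj.
have [c c_neq0 [u [v uv_c]]] := int_poly_bezout Phi_nconst no_common_root.
have vD_z : (map_poly intr (v * D)).[z] = (map_poly intr c%:P).[z].
  have := congr1 (fun q => (map_poly intr q).[z]) uv_c.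
  by rewrite /= rmorphD hornerD rmorphM hornerM Phi_z mulr0 add0r.
exists `|c|.+1 => p p_pr lt_cp phi phi_hom f f_inj.
have c_neq0_modp : c%:~R != 0 :> 'F_p.
  rewrite -(dvdz_pcharf (pchar_Fp p_pr)) dvdzE; apply: contraTN lt_cp.
  by move/dvdn_leq; rewrite absz_gt0 c_neq0 -ltnNge ltnS => ->.
have := congr1 phi vD_z; rewrite !(ring_hom_on_horner phi_hom) rmorphM hornerM horner_D.
rewrite map_polyC hornerC => vD_w.
have /prodf_neq0/(_ [ffun x => f x]) :
    \prod_(g : {ffun 'I_k -> 'I_n} | injectiveb g) \det (pow_mx (phi z) j g) != 0.
  by apply: contraNneq c_neq0_modp => prod0; rewrite -vD_w prod0 mulr0.
have -> : pow_mx (phi z) j f = pow_mx (phi z) j [ffun x => f x].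
  by apply/matrixP => i l; rewrite !mxE ffunE.
by apply; apply/injectiveP => x y; rewrite !ffunE => /f_inj.
Qed.

Lemma prime_dvd_geom_sum_1mod n q a : prime n -> prime q -> q != n ->
  (q %| \sum_(i < n) a ^ i)%N -> (n %| q.-1)%N.
Proof.
move=> n_pr q_pr q_neq_n q_dvd_sum; have pchar_q := pchar_Fp q_pr.
pose x : 'F_q := a%:R.
have sum0 : \sum_(i < n) x ^+ i = 0.
  by apply/eqP; under eq_bigr do rewrite -natrX; rewrite -natr_sum -(dvdn_pcharf pchar_q).
have xn1 : x ^+ n = 1 by apply/eqP; rewrite -subr_eq0 subrX1 sum0 mulr0.
have x_neq1 : x != 1.
  move/eqP: sum0; apply: contraTneq => ->; under eq_bigr do rewrite expr1n.
  by rewrite sumr_const card_ord -(dvdn_pcharf pchar_q) dvdn_prime2.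
have x_neq0 : x != 0 by move: (oner_neq0 'F_q); rewrite -xn1 expf_eq0 prime_gt0.
rewrite (prim_order_dvd (prime_prim_root n_pr xn1 x_neq1)); apply/eqP/(mulIf x_neq0).
rewrite -exprSr prednK ?prime_gt0 // mul1r.
by have := expf_card x; rewrite card_Fp.
Qed.

Lemma exists_prime_1mod n N : prime n ->
  exists p, [/\ prime p, (N <= p)%N & (n %| p.-1)%N].
Proof.
(* Prime divisors of 1 + a + ... + a^(n-1) are coprime to a = n * N!, so they exceed N and
   differ from n. *)
move=> n_pr; pose a := (n * N`!)%N.
have a_gt0 : (0 < a)%N by rewrite muln_gt0 prime_gt0 ?fact_gt0.
have sumE : (\sum_(i < n) a ^ i = 1 + a * \sum_(i < n.-1) a ^ i)%N.
  rewrite -(prednK (prime_gt0 n_pr)) big_ord_recl big_distrr /=.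
  by congr (_ + _)%N; apply: eq_bigr => i _; rewrite expnS.
have sum_gt1 : (1 < \sum_(i < n) a ^ i)%N.
  rewrite sumE -[X in (X < _)%N]addn0 ltn_add2l muln_gt0 a_gt0 /=.
  by rewrite -(prednK (_ : 0 < n.-1)%N) ?ltn_predRL ?prime_gt1 // big_ord_recl expn0.
pose q := pdiv (\sum_(i < n) a ^ i); have q_pr : prime q := pdiv_prime sum_gt1.
have q_ndvd_a : ~~ (q %| a)%N.
  apply: contraL (pdiv_dvd (\sum_(i < n) a ^ i)) => q_dvd_a.
  by rewrite -/q sumE dvdn_addl ?(dvdn_mulr _ q_dvd_a) // dvdn1 gtn_eqF ?prime_gt1.
exists q; split => //.
  rewrite leqNgt; apply: contra q_ndvd_a => lt_qN.
  by rewrite dvdn_mull // dvdn_fact // prime_gt0 // ltnW.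
apply: prime_dvd_geom_sum_1mod (pdiv_dvd _) => //.
by apply: contraNneq q_ndvd_a => q_eq_n; rewrite /q q_eq_n dvdn_mulr.
Qed.

Theorem mainTheorem4 (n k : nat) (j : 'I_k -> 'I_n) :
  prime n -> (5 <= n)%N -> (3 <= k)%N -> injective j ->
  (* (1) over K = Q(zeta_n) *)
  (cyclic_code (in_Qzeta (zeta_n n)) (Gmat j) /\ mds_code (Gmat j)) /\
  (* (2) reductions modulo primes above sufficiently large p = 1 mod n *)
  ((forall N : nat, exists p : nat, [/\ prime p, (N <= p)%N & (n %| p.-1)%N]) /\
   exists N : nat, forall p : nat, prime p -> (N <= p)%N -> (n %| p.-1)%N ->
     forall phi : algC -> 'F_p, ring_hom_on (in_Zzeta (zeta_n n)) phi ->
       let Gbar := map_mx phi (Gmat j) in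
       cyclic_code (fun _ => True) Gbar /\ mds_code Gbar).
Proof.
move=> n_pr _ _ j_inj; have prim_zeta := zeta_n_prim_root n_pr.
split.
  apply: (cyclic_mds_pow_mx (prim_expr_order prim_zeta) _ j_inj) => [x e [q ->] | f f_inj].
    by exists (q * 'X^e); rewrite rmorphM /= map_polyXn hornerM hornerXn.
  exact: det_pow_mx_prim_root_neq0 n_pr prim_zeta j_inj f_inj.
split=> [N | ]; first exact: exists_prime_1mod.
have [N minors] := det_pow_mx_neq0_modp n_pr prim_zeta j_inj.
exists N => p p_pr le_Np _ phi phi_hom Gbar.
have phi_exp e : phi (zeta_n n ^+ e) = phi (zeta_n n) ^+ e.
  by have := ring_hom_on_horner phi_hom 'X^e; rewrite !map_polyXn !hornerXn.
have -> : Gbar = pow_mx (phi (zeta_n n)) j id.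
  by apply/matrixP => i l; rewrite !mxE phi_exp.
apply: cyclic_mds_pow_mx j_inj (minors p p_pr le_Np phi phi_hom) => //.
by rewrite -phi_exp (prim_expr_order prim_zeta); case: phi_hom.
Qed.
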